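(* Let $\kappa>0$, $u_0>0$, and let $(r(\psi),u(\psi))$ be the profile of a sessile liquid channel, parametrized by the inclination angle $\psi$. Let $R=r(\pi/2)$ and $r_o=\lim_{\psi\to\pi}r(\psi)$. Then for $0<\psi\le\pi$, $$u(\psi)-u_0<\sqrt{\frac{2(1-\cos\psi)}\kappa},$$ and for $\pi/2\le\psi\le\pi$, $$R-r(\psi)<\frac1{\sqrt\kappa}\Big(\sqrt2+\log\big(\tan\tfrac\pi8\big)-2\cos\tfrac\psi2-\log\big(\tan\tfrac\psi4\big)\Big).$$ In particular, $$u(\psi)-u(R)<\frac{\sqrt{2(1-\cos\psi)}-\sqrt2}{\sqrt\kappa}\quad(\pi/2\le\psi\le\pi),\qquad R-r_o<\sqrt{\frac2\kappa},\qquad u(\pi)-u(R)<\frac{2-\sqrt2}{\sqrt\kappa},$$ where $u(R)$ denotes $u(\pi/2)$.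
   Context: $(r(\psi),u(\psi))$, $\psi\in[0,\pi]$, is the solution of $\frac{dr}{d\psi}=\frac{\cos\psi}{\kappa u}$, $\frac{du}{d\psi}=\frac{\sin\psi}{\kappa u}$, $r(0)=0$, $u(0)=u_0$; it is the cross-section profile of the $\kappa$-cylindrical surface solving $\frac{d}{dr}\big(u'/\sqrt{1+u'^2}\big)=\kappa u$, $u(0)=u_0$, $u'(0)=0$, continued past its vertical point $\psi=\pi/2$. *)

From Stdlib Require Export Reals.
From Coquelicot Require Export Coquelicot.
Open Scope R_scope.

Definition channel_profile (kappa u0 : R) (r u : R -> R) : Prop :=
  continuous_on (fun psi => 0 <= psi <= PI) r /\
  continuous_on (fun psi => 0 <= psi <= PI) u /\
  (forall psi, 0 < psi < PI -> is_derive r psi (cos psi / (kappa * u psi))) /\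
  (forall psi, 0 < psi < PI -> is_derive u psi (sin psi / (kappa * u psi))) /\
  r 0 = 0 /\ u 0 = u0.

(* Along the profile (u^2)' = 2 sin psi / kappa, so
   kappa u^2 = kappa u0^2 + 2 (1 - cos psi) = kappa u0^2 + 4 sin^2 (psi/2).
   The bounds on u follow because sqrt (w + a^2) - a decreases in a.
   For r, compare dr/dpsi = cos psi / (kappa u) with the slope
   cos psi / (2 sqrt kappa sin (psi/2)) of the degenerate profile u0 = 0: since
   sqrt kappa u > 2 sin (psi/2) and cos psi < 0 beyond pi/2, r minus the
   degenerate profile increases on [pi/2, pi]. *)

From Stdlib Require Import Reals Lra.
From Coquelicot Require Import Coquelicot.
Open Scope R_scope.

Lemma continuous_on_plus (D : R -> Prop) (f g : R -> R) :
  continuous_on D f -> continuous_on D g -> continuous_on D (fun x => f x + g x).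
Proof.
  intros Hf Hg x Dx.
  exact (filterlim_comp_2 _ _ _ (Hf x Dx) (Hg x Dx) (filterlim_plus (f x) (g x))).
Qed.

Lemma continuous_on_mult (D : R -> Prop) (f g : R -> R) :
  continuous_on D f -> continuous_on D g -> continuous_on D (fun x => f x * g x).
Proof.
  intros Hf Hg x Dx.
  exact (filterlim_comp_2 _ _ _ (Hf x Dx) (Hg x Dx) (filterlim_mult (f x) (g x))).
Qed.

Lemma continuous_on_of_is_derive (D : R -> Prop) (f df : R -> R) :
  (forall x, D x -> is_derive f x (df x)) -> continuous_on D f.
Proof.
  intros Hf. apply continuous_on_forall. intros x Dx.
  exact (ex_derive_continuous f x (ex_intro _ _ (Hf x Dx))).
Qed.

(* Extending [f] by constants outside [[a, b]] gives a function continuous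
   everywhere, as Stdlib's [MVT] and [IVT] require. *)
Definition clamp (a b t : R) : R := Rmax a (Rmin b t).

Lemma clamp_in (a b t : R) : a <= b -> a <= clamp a b t <= b.
Proof. intros; unfold clamp, Rmax, Rmin; repeat destruct Rle_dec; lra. Qed.

Lemma clamp_id (a b t : R) : a <= t <= b -> clamp a b t = t.
Proof. intros; unfold clamp, Rmax, Rmin; repeat destruct Rle_dec; lra. Qed.

Lemma clamp_lipschitz (a b t s : R) :
  a <= b -> Rabs (clamp a b t - clamp a b s) <= Rabs (t - s).
Proof.
  intros; unfold clamp, Rmax, Rmin, Rabs.
  repeat destruct Rle_dec; repeat destruct Rcase_abs; lra.
Qed.

Lemma continuity_pt_clamp (f : R -> R) (a b x : R) : a <= b ->
  continuous_on (fun t => a <= t <= b) f -> continuity_pt (fun t => f (clamp a b t)) x.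
Proof.
  intros Hab Hf. apply continuity_pt_filterlim.
  apply filterlim_comp with (G := within (fun t => a <= t <= b) (locally (clamp a b x))).
  - intros P [eps HP]. exists eps. intros y Hy. apply HP.
    + exact (Rle_lt_trans _ _ _ (clamp_lipschitz a b y x Hab) Hy).
    + now apply clamp_in.
  - apply Hf. now apply clamp_in.
Qed.

Lemma MVT_continuous_on (f df : R -> R) (a b : R) : a < b ->
  continuous_on (fun x => a <= x <= b) f ->
  (forall x, a < x < b -> is_derive f x (df x)) ->
  exists c, a < c < b /\ f b - f a = df c * (b - a).
Proof.
  intros Hab Hf Hdf.
  set (g := fun x => f (clamp a b x)).
  assert (Hg : forall x, a < x < b -> derivable_pt_lim g x (df x)).
  { intros x Hx. apply is_derive_Reals, is_derive_ext_loc with f; [|now apply Hdf].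
    apply (locally_interval _ x a b); try easy.
    intros y Hay Hyb. unfold g. rewrite clamp_id; simpl in *; lra. }
  destruct (MVT g id a b (fun c P => exist _ (df c) (Hg c P))
              (fun c _ => derivable_pt_id c) Hab) as [c [Hc Hmvt]].
  - intros c _. apply continuity_pt_clamp; [lra | exact Hf].
  - intros c _. apply derivable_continuous_pt, derivable_pt_id.
  - exists c. split; [exact Hc|].
    rewrite derive_pt_id in Hmvt. simpl in Hmvt. unfold g, id in Hmvt.
    rewrite !clamp_id in Hmvt by lra. lra.
Qed.

Section Monotonicity.

Variables (f df : R -> R) (a b : R).
Hypothesis lt_ab : a < b.
Hypothesis f_cont : continuous_on (fun x => a <= x <= b) f.
Hypothesis f_derive : forall x, a < x < b -> is_derive f x (df x).

Lemma le_of_derive_nonneg : (forall x, a < x < b -> 0 <= df x) -> f a <= f b.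
Proof.
  intros Hpos. destruct (MVT_continuous_on f df a b) as [c [Hc E]]; auto.
  assert (0 <= df c * (b - a)) by (apply Rmult_le_pos; [apply Hpos, Hc | lra]). lra.
Qed.

Lemma lt_of_derive_pos : (forall x, a < x < b -> 0 < df x) -> f a < f b.
Proof.
  intros Hpos. destruct (MVT_continuous_on f df a b) as [c [Hc E]]; auto.
  assert (0 < df c * (b - a)) by (apply Rmult_lt_0_compat; [apply Hpos, Hc | lra]). lra.
Qed.

Lemma eq_of_derive_zero : (forall x, a < x < b -> df x = 0) -> f a = f b.
Proof.
  intros H0. destruct (MVT_continuous_on f df a b) as [c [Hc E]]; auto.
  rewrite H0 in E by exact Hc. lra.
Qed.

End Monotonicity.

Lemma continuous_on_pos_of_neq0 (f : R -> R) (a b : R) :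
  continuous_on (fun x => a <= x <= b) f -> 0 < f a ->
  (forall x, a <= x <= b -> f x <> 0) -> forall x, a <= x <= b -> 0 < f x.
Proof.
  intros Hf Ha Hneq x Hx.
  destruct (Rlt_or_le 0 (f x)) as [Hpos | Hle]; [exact Hpos | exfalso].
  assert (Hneg : f x < 0) by (specialize (Hneq x Hx); lra).
  assert (Hax : a < x) by (destruct (Req_dec a x) as [<- | ?]; lra).
  destruct (IVT (fun t => - f (clamp a b t)) a x) as [z [Hz Ez]].
  - intro t. apply continuity_pt_opp, continuity_pt_clamp; [lra | exact Hf].
  - exact Hax.
  - rewrite clamp_id by lra. lra.
  - rewrite clamp_id by lra. lra.
  - rewrite clamp_id in Ez by lra. apply (Hneq z); lra.
Qed.

Lemma is_derive_sq (f : R -> R) (x l : R) :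
  is_derive f x l -> is_derive (fun t => f t ^ 2) x (2 * f x * l).
Proof.
  intros Hf. replace (2 * f x * l) with (INR 2 * l * f x ^ Nat.pred 2) by (simpl; ring).
  now apply is_derive_pow.
Qed.

(* [x - a = w / (x + a)] for [x = sqrt (w + a^2)]. *)
Lemma sqrt_add_sq_sub_lt (w a b : R) : 0 < w -> 0 <= b < a ->
  sqrt (w + a ^ 2) - a < sqrt (w + b ^ 2) - b.
Proof.
  intros Hw Hab.
  assert (Hx := pow2_sqrt (w + a ^ 2) ltac:(nra)).
  assert (Hy := pow2_sqrt (w + b ^ 2) ltac:(nra)).
  assert (Hx0 := sqrt_pos (w + a ^ 2)). assert (Hy0 := sqrt_pos (w + b ^ 2)).
  set (x := sqrt (w + a ^ 2)) in *. set (y := sqrt (w + b ^ 2)) in *.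
  assert (Hxy : y < x) by nra.
  assert (Hyb : b < y) by nra.
  destruct (Rlt_or_le (x - a) (y - b)) as [Hlt | Hge]; [exact Hlt | exfalso].
  assert ((y - b) * (y + b) < (y - b) * (x + a)) by (apply Rmult_lt_compat_l; lra).
  assert ((y - b) * (x + a) <= (x - a) * (x + a)) by (apply Rmult_le_compat_r; lra).
  nra.
Qed.

(* [gauge t / sqrt kappa] is, up to a constant, the degenerate profile [r] with
   [u0 = 0], i.e. [sqrt kappa * u = 2 * sin (t / 2)]. *)
Definition gauge (t : R) : R := 2 * cos (t / 2) + ln (tan (t / 4)).

Lemma is_derive_gauge (t : R) : 0 < t < 2 * PI ->
  is_derive gauge t (cos t / (2 * sin (t / 2))).
Proof.
  intros Ht. unfold gauge, tan.
  assert (Hs : 0 < sin (t / 4)) by (apply sin_gt_0; lra).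
  assert (Hc : 0 < cos (t / 4)) by (apply cos_gt_0; lra).
  assert (Hsin : sin (t / 2) = 2 * sin (t / 4) * cos (t / 4))
    by (rewrite <- sin_2a; f_equal; field).
  assert (Hcos : cos t = 1 - 2 * sin (t / 2) * sin (t / 2))
    by (rewrite <- cos_2a_sin; f_equal; field).
  assert (Hpyth : sin (t / 4) ^ 2 + cos (t / 4) ^ 2 = 1)
    by (rewrite <- (sin2_cos2 (t / 4)); unfold Rsqr; ring).
  auto_derive.
  - repeat split; try lra. apply Rdiv_lt_0_compat; lra.
  - change (t * / 2) with (t / 2). change (t * / 4) with (t / 4).
    rewrite Hcos, Hsin. field_simplify_eq; lra.
Qed.

Lemma gauge_half_pi : gauge (PI / 2) = sqrt 2 + ln (tan (PI / 8)).
Proof.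
  unfold gauge. replace (PI / 2 / 2) with (PI / 4) by field.
  replace (PI / 2 / 4) with (PI / 8) by field.
  rewrite cos_PI4. f_equal.
  assert (Hs : 0 < sqrt 2) by (apply sqrt_lt_R0; lra).
  field_simplify_eq; [| lra].
  symmetry. apply pow2_sqrt. lra.
Qed.

Lemma ln_tan_PI8_neg : ln (tan (PI / 8)) < 0.
Proof.
  assert (HPI := PI_RGT_0).
  rewrite <- ln_1. apply ln_increasing; [apply tan_gt_0; lra|].
  rewrite <- tan_PI4. apply tan_increasing_1; lra.
Qed.

Section ChannelProfile.

Variables (kappa u0 : R) (r u : R -> R).
Hypothesis kappa_pos : 0 < kappa.
Hypothesis u0_pos : 0 < u0.
Hypothesis profile : channel_profile kappa u0 r u.

Let r_cont : continuous_on (fun psi => 0 <= psi <= PI) r := proj1 profile.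
Let u_cont : continuous_on (fun psi => 0 <= psi <= PI) u := proj1 (proj2 profile).
Let r_derive : forall psi, 0 < psi < PI -> is_derive r psi (cos psi / (kappa * u psi)) :=
  proj1 (proj2 (proj2 profile)).
Let u_derive : forall psi, 0 < psi < PI -> is_derive u psi (sin psi / (kappa * u psi)) :=
  proj1 (proj2 (proj2 (proj2 profile))).
Let u_at_0 : u 0 = u0 := proj2 (proj2 (proj2 (proj2 (proj2 profile)))).

Let continuous_on_sub (a b : R) (f : R -> R) : 0 <= a -> b <= PI ->
  continuous_on (fun psi => 0 <= psi <= PI) f -> continuous_on (fun psi => a <= psi <= b) f.
Proof. intros Ha Hb. apply continuous_on_subset. intros; lra. Qed.

Let u_sq_cont (a b : R) : 0 <= a -> b <= PI ->
  continuous_on (fun psi => a <= psi <= b) (fun psi => u psi ^ 2).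
Proof.
  intros Ha Hb.
  apply continuous_on_ext with (fun psi => u psi * u psi); [intros x _; simpl; ring|].
  apply continuous_on_mult; now apply continuous_on_sub.
Qed.

Lemma profile_u_sq_ge (psi : R) : 0 <= psi <= PI -> u0 ^ 2 <= u psi ^ 2.
Proof.
  intros Hpsi. destruct (Req_dec psi 0) as [-> | Hpsi0]; [rewrite u_at_0; lra|].
  rewrite <- u_at_0.
  apply (le_of_derive_nonneg (fun x => u x ^ 2)
           (fun x => 2 * u x * (sin x / (kappa * u x)))); try lra.
  - apply u_sq_cont; lra.
  - intros x Hx. apply is_derive_sq, u_derive. lra.
  (* [u] may still vanish here; there the derivative is [0] (with [x / 0 = 0]) *)
  - intros x Hx. assert (0 <= sin x) by (apply sin_ge_0; lra).
    destruct (Req_dec (u x) 0) as [-> | Hux]; [lra|].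
    replace (2 * u x * (sin x / (kappa * u x))) with (2 * sin x / kappa) by (field; lra).
    apply Rmult_le_pos; [lra | apply Rlt_le, Rinv_0_lt_compat, kappa_pos].
Qed.

Lemma profile_u_neq0 (psi : R) : 0 <= psi <= PI -> u psi <> 0.
Proof.
  intros Hpsi Hu. assert (H := profile_u_sq_ge psi Hpsi). rewrite Hu in H. nra.
Qed.

Lemma profile_energy (psi : R) : 0 <= psi <= PI ->
  u psi ^ 2 = u0 ^ 2 + 2 * (1 - cos psi) / kappa.
Proof.
  intros Hpsi. destruct (Req_dec psi 0) as [-> | Hpsi0].
  { rewrite u_at_0, cos_0. field. lra. }
  set (E := fun x => 2 * (1 - cos x) / kappa).
  assert (HE : forall x, is_derive E x (2 * sin x / kappa)).
  { intros x. unfold E. auto_derive; [lra | field; lra]. }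
  enough (u 0 ^ 2 + - E 0 = u psi ^ 2 + - E psi)
    by (rewrite u_at_0 in *; unfold E in *; rewrite cos_0 in *; lra).
  apply (eq_of_derive_zero (fun x => u x ^ 2 + - E x)
           (fun x => 2 * u x * (sin x / (kappa * u x)) + - (2 * sin x / kappa))); try lra.
  - apply continuous_on_plus; [apply u_sq_cont; lra|].
    apply continuous_on_of_is_derive with (df := fun x => - (2 * sin x / kappa)).
    intros x _. exact (is_derive_opp E x _ (HE x)).
  - intros x Hx. apply (is_derive_plus (fun x => u x ^ 2) (fun x => - E x)).
    + apply is_derive_sq, u_derive. lra.
    + exact (is_derive_opp E x _ (HE x)).
  - intros x Hx. assert (u x <> 0) by (apply profile_u_neq0; lra). field. lra.
Qed.

Lemma profile_u_pos (psi : R) : 0 <= psi <= PI -> 0 < u psi.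
Proof.
  apply (continuous_on_pos_of_neq0 u 0 PI u_cont); [now rewrite u_at_0|].
  exact profile_u_neq0.
Qed.

Lemma profile_u_eq_sqrt (psi : R) : 0 <= psi <= PI ->
  u psi = sqrt (u0 ^ 2 + (sqrt (2 * (1 - cos psi)) / sqrt kappa) ^ 2).
Proof.
  intros Hpsi.
  assert (Hcos := COS_bound psi).
  assert (E := profile_energy psi Hpsi).
  unfold Rdiv in *. rewrite Rpow_mult_distr, pow_inv, !pow2_sqrt, <- E by lra.
  symmetry. apply sqrt_pow2, Rlt_le, profile_u_pos, Hpsi.
Qed.

Lemma profile_u_sub_u0_lt (psi : R) : 0 < psi <= PI ->
  u psi - u0 < sqrt (2 * (1 - cos psi) / kappa).
Proof.
  intros Hpsi.
  assert (Hcos : cos psi < 1) by (rewrite <- cos_0; apply cos_decreasing_1; lra).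
  assert (Ha : 0 < sqrt (2 * (1 - cos psi)) / sqrt kappa)
    by (apply Rdiv_lt_0_compat; apply sqrt_lt_R0; lra).
  assert (Hlt := sqrt_add_sq_sub_lt (u0 ^ 2) _ 0 ltac:(nra) (conj (Rle_refl 0) Ha)).
  replace (u0 ^ 2 + 0 ^ 2) with (u0 ^ 2) in Hlt by ring.
  rewrite sqrt_pow2, <- profile_u_eq_sqrt in Hlt by lra.
  rewrite sqrt_div_alt by exact kappa_pos. lra.
Qed.

Lemma profile_u_sub_u_half_pi_lt (psi : R) : PI / 2 < psi <= PI ->
  u psi - u (PI / 2) < (sqrt (2 * (1 - cos psi)) - sqrt 2) / sqrt kappa.
Proof.
  intros Hpsi.
  assert (Hcos : cos psi < 0) by (apply cos_lt_0; lra).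
  assert (Hk := sqrt_lt_R0 kappa kappa_pos).
  assert (Hb : 0 <= sqrt 2 / sqrt kappa)
    by (apply Rlt_le, Rdiv_lt_0_compat; [apply sqrt_lt_R0; lra | exact Hk]).
  assert (Hab : sqrt 2 / sqrt kappa < sqrt (2 * (1 - cos psi)) / sqrt kappa).
  { apply Rmult_lt_compat_r; [now apply Rinv_0_lt_compat | apply sqrt_lt_1; lra]. }
  assert (Hlt := sqrt_add_sq_sub_lt (u0 ^ 2) _ _ ltac:(nra) (conj Hb Hab)).
  assert (Hhalf : sqrt 2 / sqrt kappa = sqrt (2 * (1 - cos (PI / 2))) / sqrt kappa)
    by (rewrite cos_PI2; do 3 f_equal; ring).
  rewrite Hhalf, <- !profile_u_eq_sqrt, <- Hhalf in Hlt by lra.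
  unfold Rdiv in *. lra.
Qed.

Lemma profile_two_sin_half_lt (psi : R) : 0 <= psi <= PI ->
  2 * sin (psi / 2) < sqrt kappa * u psi.
Proof.
  intros Hpsi.
  assert (Hk2 := pow2_sqrt kappa (Rlt_le _ _ kappa_pos)).
  assert (Hk := sqrt_lt_R0 kappa kappa_pos).
  assert (Hu := profile_u_pos psi Hpsi).
  assert (Hcos : cos psi = 1 - 2 * sin (psi / 2) * sin (psi / 2))
    by (rewrite <- cos_2a_sin; f_equal; field).
  assert (Hsq : (sqrt kappa * u psi) ^ 2 = kappa * u0 ^ 2 + (2 * sin (psi / 2)) ^ 2).
  { rewrite Rpow_mult_distr, Hk2, profile_energy, Hcos by exact Hpsi. field. lra. }
  assert (0 < kappa * u0 ^ 2) by (apply Rmult_lt_0_compat; nra).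
  assert (0 < sqrt kappa * u psi) by (apply Rmult_lt_0_compat; lra).
  nra.
Qed.

Lemma profile_r_sub_gauge_increasing (psi : R) : PI / 2 < psi <= PI ->
  r (PI / 2) - gauge (PI / 2) / sqrt kappa < r psi - gauge psi / sqrt kappa.
Proof.
  intros Hpsi.
  assert (Hk := sqrt_lt_R0 kappa kappa_pos).
  assert (Hk2 := pow2_sqrt kappa (Rlt_le _ _ kappa_pos)).
  set (dG := fun t => - / sqrt kappa * (cos t / (2 * sin (t / 2)))).
  assert (HG : forall t, 0 < t < 2 * PI ->
            is_derive (fun t => - / sqrt kappa * gauge t) t (dG t)).
  { intros t Ht. apply is_derive_scal, is_derive_gauge, Ht. }
  enough (r (PI / 2) + - / sqrt kappa * gauge (PI / 2) < r psi + - / sqrt kappa * gauge psi)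
    by (unfold Rdiv; lra).
  apply (lt_of_derive_pos (fun t => r t + - / sqrt kappa * gauge t)
           (fun t => cos t / (kappa * u t) + dG t)); try lra.
  - apply continuous_on_plus; [apply continuous_on_sub; [lra | lra | exact r_cont]|].
    apply continuous_on_of_is_derive with dG. intros t Ht. apply HG. lra.
  - intros t Ht. apply (is_derive_plus r).
    + apply r_derive. lra.
    + apply HG. lra.
  - intros t Ht. unfold dG.
    assert (Hcos : cos t < 0) by (apply cos_lt_0; lra).
    assert (Hs : 0 < sin (t / 2)) by (apply sin_gt_0; lra).
    assert (Hu := profile_u_pos t ltac:(lra)).
    assert (Hlt := profile_two_sin_half_lt t ltac:(lra)).
    set (k := sqrt kappa) in *.
    assert (Hkk : kappa = k ^ 2) by (symmetry; exact Hk2).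
    replace (cos t / (kappa * u t) + - / k * (cos t / (2 * sin (t / 2))))
      with (- cos t * (k * u t - 2 * sin (t / 2)) / (2 * sin (t / 2) * k * k * u t))
      by (rewrite Hkk; field; lra).
    apply Rdiv_lt_0_compat; [apply Rmult_lt_0_compat; lra|].
    repeat apply Rmult_lt_0_compat; lra.
Qed.

End ChannelProfile.

Theorem mainTheorem16 (kappa u0 : R) (r u : R -> R) :
  0 < kappa -> 0 < u0 -> channel_profile kappa u0 r u ->
  (forall psi, 0 < psi <= PI ->
     u psi - u0 < sqrt (2 * (1 - cos psi) / kappa)) /\
  (forall psi, PI / 2 < psi <= PI ->
     r (PI / 2) - r psi <
       / sqrt kappa * (sqrt 2 + ln (tan (PI / 8)) - 2 * cos (psi / 2)
                       - ln (tan (psi / 4)))) /\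
  (forall psi, PI / 2 < psi <= PI ->
     u psi - u (PI / 2) < (sqrt (2 * (1 - cos psi)) - sqrt 2) / sqrt kappa) /\
  r (PI / 2) - r PI < sqrt (2 / kappa) /\
  u PI - u (PI / 2) < (2 - sqrt 2) / sqrt kappa.
Proof.
  intros Hk Hu0 Hprof.
  assert (HPI := PI_RGT_0).
  assert (Hsk := sqrt_lt_R0 kappa Hk).
  assert (Hr : forall psi, PI / 2 < psi <= PI ->
     r (PI / 2) - r psi <
       / sqrt kappa * (sqrt 2 + ln (tan (PI / 8)) - 2 * cos (psi / 2) - ln (tan (psi / 4)))).
  { intros psi Hpsi. rewrite <- gauge_half_pi.
    assert (H := profile_r_sub_gauge_increasing kappa u0 r u Hk Hu0 Hprof psi Hpsi).
    unfold gauge, Rdiv in *. lra. }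
  assert (Hu := profile_u_sub_u_half_pi_lt kappa u0 r u Hk Hu0 Hprof).
  split; [exact (profile_u_sub_u0_lt kappa u0 r u Hk Hu0 Hprof)|].
  split; [exact Hr|]. split; [exact Hu|]. split.
  - assert (H := Hr PI ltac:(lra)).
    rewrite cos_PI2, tan_PI4, ln_1 in H.
    rewrite sqrt_div_alt by exact Hk. unfold Rdiv.
    assert (H8 := ln_tan_PI8_neg).
    assert (Hinv := Rinv_0_lt_compat _ Hsk). nra.
  - assert (H := Hu PI ltac:(lra)). rewrite cos_PI in H.
    replace (2 * (1 - -1)) with (2 * 2) in H by ring.
    rewrite sqrt_square in H by lra. exact H.
Qed.
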